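(* Let $A$ be an antilinear operator on a complex $n$-dimensional space $W$, let $\lambda>0$ be real, and for $k\ge0$ put $W_\lambda^{(k)}=\ker(A^2-\lambda^2 I)^k$ (a complex subspace) and $\widetilde W_\lambda^{(k)}=\{x\in W:(A-\lambda I)^kx=0\}$ (a real subspace). Then any basis of the real vector space $\widetilde W_\lambda^{(k)}$ is also a basis of the complex vector space $W_\lambda^{(k)}$.
   Context: An antilinear operator satisfies $A(zv+w)=\bar z Av+Aw$. Since $\lambda$ is real, $A-\lambda I$ is antilinear and its iterates' kernels are real vector subspaces. *)

From HB Require Import structures.
From mathcomp Require Import all_boot all_order all_algebra.
Set Implicit Arguments. Unset Strict Implicit. Unset Printing Implicit Defensive.
Import Order.TTheory GRing.Theory Num.Theory.
Local Open Scope ring_scope.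

Definition antilinear (C : numClosedFieldType) (n : nat)
  (A : 'rV[C]_n -> 'rV[C]_n) : Prop :=
  forall (z : C) (v w : 'rV[C]_n), A (z *: v + w) = z^* *: A v + A w.

Definition Wk (C : numClosedFieldType) (n : nat) (A : 'rV[C]_n -> 'rV[C]_n)
  (lam : C) (k : nat) : pred 'rV[C]_n :=
  fun x => iter k (fun y => A (A y) - lam ^+ 2 *: y) x == 0.

Definition Wtk (C : numClosedFieldType) (n : nat) (A : 'rV[C]_n -> 'rV[C]_n)
  (lam : C) (k : nat) : pred 'rV[C]_n :=
  fun x => iter k (fun y => A y - lam *: y) x == 0.

Definition real_basis_of (C : numClosedFieldType) (n : nat)
  (S : pred 'rV[C]_n) (s : seq 'rV[C]_n) : Prop :=
  [/\ (forall v, v \in s -> S v),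
      (forall c : 'I_(size s) -> C, (forall i, c i \is Num.real) ->
          \sum_(i < size s) c i *: s`_i = 0 -> forall i, c i = 0)
    & (forall x, S x -> exists c : 'I_(size s) -> C,
          (forall i, c i \is Num.real) /\ x = \sum_(i < size s) c i *: s`_i)].

Definition complex_basis_of (C : numClosedFieldType) (n : nat)
  (S : pred 'rV[C]_n) (s : seq 'rV[C]_n) : Prop :=
  free s /\ (forall x, S x <-> x \in <<s>>%VS).

(* Write A_- = A - lam and A_+ = A + lam.  Because lam is real, both maps are
   real-linear, they commute, A_+ - A_- = 2 lam is invertible, and
   A^2 - lam^2 = A_- A_+.  Hence ker A_-^k and ker A_+^k meet trivially and
   ker (A^2 - lam^2)^k = ker A_-^k + ker A_+^k.  Antilinearity gives
   A_-('i y) = -'i A_+ y, so ker A_+^k = 'i ker A_-^k.  The real subspace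
   K = ker A_-^k thus satisfies K \cap 'i K = 0 and K + 'i K = W_lam^(k), and a
   real basis of such a totally real subspace is a complex basis of K + 'i K. *)
From HB Require Import structures.
From mathcomp Require Import all_boot all_order all_algebra.
Import Order.TTheory GRing.Theory Num.Theory.
Local Open Scope ring_scope.
Set Implicit Arguments. Unset Strict Implicit.

Section RealLinear.
Variables (C : numClosedFieldType) (n : nat).
Local Notation V := 'rV[C]_n.

Definition real_linear (f : V -> V) :=
  forall a v w, a \is Num.real -> f (a *: v + w) = a *: f v + f w.

Definition real_subspace (K : pred V) :=
  K 0 /\ forall a u v, a \is Num.real -> K u -> K v -> K (a *: u + v).

Definition totally_real (K : pred V) := forall v, K v -> K ('i *: v) -> v = 0.

Variable f : V -> V.
Hypothesis linf : real_linear f.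

Lemma real_linear0 : f 0 = 0.
Proof.
have := @linf 1 0 0 (rpred1 _); rewrite !scale1r !addr0 => /eqP.
by rewrite -subr_eq0 opprD addrA subrr add0r oppr_eq0 => /eqP.
Qed.

Lemma real_linearZ a v : a \is Num.real -> f (a *: v) = a *: f v.
Proof. by move=> Ra; rewrite -[a *: v]addr0 linf // real_linear0 addr0. Qed.

Lemma real_linearD v w : f (v + w) = f v + f w.
Proof. by rewrite -[v]scale1r linf ?rpred1 // !scale1r. Qed.

Lemma real_linearN v : f (- v) = - f v.
Proof. by rewrite -scaleN1r real_linearZ ?rpredN1 // scaleN1r. Qed.

Lemma real_linearB v w : f (v - w) = f v - f w.
Proof. by rewrite real_linearD real_linearN. Qed.

Lemma real_linear_iter m : real_linear (iter m f).
Proof. by elim: m => [|m IHm] a v w Ra //=; rewrite IHm // linf. Qed.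

Lemma real_subspace_ker : real_subspace [pred x | f x == 0].
Proof.
split=> [|a u v Ra /eqP fu /eqP fv]; rewrite inE ?real_linear0 //.
by rewrite linf // fu fv scaler0 addr0.
Qed.

End RealLinear.

Lemma real_subspace_sum (C : numClosedFieldType) (n m : nat) (K : pred 'rV[C]_n)
    (c : 'I_m -> C) (v : 'I_m -> 'rV[C]_n) :
  real_subspace K -> (forall i, c i \is Num.real) -> (forall i, K (v i)) ->
  K (\sum_(i < m) c i *: v i).
Proof.
move=> [K0 KZD] Rc Kv; apply: (big_rec (fun x => K x)) => // i x _ Kx.
exact: KZD.
Qed.

Lemma real_subspaceN (C : numClosedFieldType) (n : nat) (K : pred 'rV[C]_n) u :
  real_subspace K -> K u -> K (- u).
Proof.
by move=> [K0 KZD] Ku; rewrite -[- u]addr0 -scaleN1r; apply: KZD; rewrite ?rpredN1.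
Qed.

Lemma iter_comm (T : Type) (f g : T -> T) m x :
  (forall y, f (g y) = g (f y)) -> iter m f (g x) = g (iter m f x).
Proof. by move=> fg; elim: m => [|m IHm] //=; rewrite IHm fg. Qed.

Lemma iter_iter_comm (T : Type) (f g : T -> T) m l x :
  (forall y, f (g y) = g (f y)) -> iter m f (iter l g x) = iter l g (iter m f x).
Proof. by move=> fg; elim: l => [|l IHl] //=; rewrite -IHl iter_comm. Qed.

Section CoprimeShifts.
Variables (C : numClosedFieldType) (n : nat).
Local Notation V := 'rV[C]_n.
Variables (P Q : V -> V) (c : C).
Hypotheses (linP : real_linear P) (linQ : real_linear Q)
  (PQ : forall y, P (Q y) = Q (P y)) (Rc : c \is Num.real) (c_neq0 : c != 0)
  (QP : forall y, Q y - P y = c *: y).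

Let QP_comm y : Q (P y) = P (Q y). Proof. by rewrite PQ. Qed.

(* Induction on a + b: P y and Q y lie in kernels of smaller total order, and
   y = c^-1 (Q y - P y). *)
Lemma iter_ker_disjoint a b y : iter a P y = 0 -> iter b Q y = 0 -> y = 0.
Proof.
have [N] := ubnP (a + b); elim: N => // N IHN in a b y *.
case: a => [|a] // ltN; case: b ltN => [|b] // ltN Pay Qby.
have Py0 : P y = 0.
  apply: (IHN a b.+1) => //; first by rewrite -iterSr.
  by rewrite (iter_comm _ _ QP_comm) Qby real_linear0.
have Qy0 : Q y = 0.
  apply: (IHN a.+1 b); first by rewrite -addnS.
    by rewrite (iter_comm _ _ PQ) Pay real_linear0.
  by rewrite -iterSr.
have /eqP : c *: y = 0 by rewrite -QP Py0 Qy0 subr0.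
by rewrite scaler_eq0 (negbTE c_neq0) => /eqP.
Qed.

Lemma iter_ker_comp_split a b x : iter a P (iter b Q x) = 0 ->
  exists u w, [/\ x = u + w, iter a P u = 0 & iter b Q w = 0].
Proof.
have [N] := ubnP (a + b); elim: N => // N IHN in a b x *.
case: a => [|a] ltN; first by exists 0, x; rewrite add0r.
case: b ltN => [|b] ltN PQx; first by exists x, 0; rewrite addr0.
have [u1 [w1 [Px_eq Pau1 Qbw1]]] :
    exists u w, [/\ P x = u + w, iter a P u = 0 & iter b.+1 Q w = 0].
  by apply: IHN => //; rewrite (iter_comm _ _ QP_comm) -iterSr.
have [u2 [w2 [Qx_eq Pau2 Qbw2]]] :
    exists u w, [/\ Q x = u + w, iter a.+1 P u = 0 & iter b Q w = 0].
  by apply: IHN; [rewrite -addnS | rewrite -iterSr].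
have Rci : c^-1 \is Num.real by rewrite realV.
exists (c^-1 *: (u2 - u1)), (c^-1 *: (w2 - w1)); split.
- by rewrite -scalerDr addrACA -opprD -Px_eq -Qx_eq QP scalerA mulVf // scale1r.
- rewrite (real_linearZ (real_linear_iter linP _)) //.
  rewrite (real_linearB (real_linear_iter linP _)) Pau2 [iter a.+1 P u1]/= Pau1.
  by rewrite real_linear0 // subrr scaler0.
- rewrite (real_linearZ (real_linear_iter linQ _)) //.
  rewrite (real_linearB (real_linear_iter linQ _)) Qbw1 [iter b.+1 Q w2]/= Qbw2.
  by rewrite real_linear0 // subrr scaler0.
Qed.

End CoprimeShifts.

Section TotallyRealBasis.
Variables (C : numClosedFieldType) (n : nat).
Local Notation V := 'rV[C]_n.
Variables (K : pred V) (s : seq V).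
Hypotheses (K_real : real_subspace K) (sK : real_basis_of K s).

Lemma sum_scale_ReIm (c : 'I_(size s) -> C) :
  \sum_(i < size s) c i *: s`_i =
  \sum_(i < size s) 'Re (c i) *: s`_i + 'i *: \sum_(i < size s) 'Im (c i) *: s`_i.
Proof.
rewrite scaler_sumr -big_split; apply: eq_bigr => i _.
by rewrite {1}[c i]Crect scalerDl scalerA.
Qed.

Lemma real_combination_basis (c : 'I_(size s) -> C) :
  (forall i, c i \is Num.real) -> K (\sum_(i < size s) c i *: s`_i).
Proof.
by case: sK => sK_in _ _ Rc; apply: real_subspace_sum => // i; apply/sK_in/mem_nth.
Qed.

Lemma real_basis_free : totally_real K -> free s.
Proof.
case: sK => _ s_indep _ KiK; apply/(@freeP _ _ _ (in_tuple s)) => c.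
rewrite sum_scale_ReIm.
set u := \sum_(i < _) 'Re (c i) *: _; set v := \sum_(i < _) 'Im (c i) *: _.
move=> sum0.
have iv_eq : 'i *: v = - u by apply/eqP; rewrite -addr_eq0 addrC sum0.
have Ku : K u by apply: real_combination_basis => i; apply: Creal_Re.
have Kv : K v by apply: real_combination_basis => i; apply: Creal_Im.
have v0 : v = 0 by apply: KiK; rewrite // iv_eq real_subspaceN.
have u0 : u = 0 by apply: oppr_inj; rewrite -iv_eq v0 scaler0 oppr0.
move=> i; rewrite [c i]Crect.
rewrite (s_indep _ (fun j => Creal_Re _) u0) (s_indep _ (fun j => Creal_Im _) v0).
by rewrite mulr0 addr0.
Qed.

Lemma real_basis_memv x : K x -> x \in <<s>>%VS.
Proof.
case: sK => _ _ s_span /s_span [c [_ ->]].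
by apply: rpred_sum => i _; apply/memvZ/memv_span/mem_nth.
Qed.

Lemma memv_span_real_basis x :
  x \in <<s>>%VS <-> exists u v, [/\ K u, K v & x = u + 'i *: v].
Proof.
split=> [x_span | [u [v [Ku Kv ->]]]].
  have x_span' : x \in <<in_tuple s>>%VS := x_span.
  rewrite (coord_span x_span') sum_scale_ReIm.
  by do 2!eexists; split; last reflexivity; apply: real_combination_basis => i;
    [apply: Creal_Re | apply: Creal_Im].
by apply/rpredD/memvZ; apply: real_basis_memv.
Qed.

Lemma real_basis_complex_basis (W : pred V) :
  totally_real K ->
  (forall x, W x <-> exists u v, [/\ K u, K v & x = u + 'i *: v]) ->
  complex_basis_of W s.
Proof.
move=> KiK W_eq; split; first exact: real_basis_free.
by move=> x; apply: iff_trans (W_eq x) (iff_sym (memv_span_real_basis x)).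
Qed.

End TotallyRealBasis.

Section AntilinearShifts.
Variables (C : numClosedFieldType) (n : nat) (A : 'rV[C]_n -> 'rV[C]_n) (lam : C).
Hypotheses (A_anti : antilinear A) (Rlam : lam \is Num.real) (lam_neq0 : lam != 0).
Local Notation V := 'rV[C]_n.

Let Am (y : V) := A y - lam *: y.
Let Ap (y : V) := A y + lam *: y.
Let AA (y : V) := A (A y) - lam ^+ 2 *: y.

Lemma antilinear0 : A 0 = 0.
Proof.
have := A_anti 1 0 0; rewrite !scale1r !addr0 conjC1 scale1r => /eqP.
by rewrite -subr_eq0 opprD addrA subrr add0r oppr_eq0 => /eqP.
Qed.

Lemma antilinearZ z v : A (z *: v) = z^* *: A v.
Proof. by rewrite -[z *: v]addr0 A_anti antilinear0 addr0. Qed.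

Lemma antilinearD v w : A (v + w) = A v + A w.
Proof. by rewrite -[v]scale1r A_anti conjC1 !scale1r. Qed.

Lemma antilinearB v w : A (v - w) = A v - A w.
Proof. by rewrite antilinearD -scaleN1r antilinearZ rmorphN1 scaleN1r. Qed.

Lemma real_linear_antilinear : real_linear A.
Proof. by move=> a v w Ra; rewrite A_anti conj_Creal. Qed.

Lemma real_linear_shift (mu : C) :
  mu \is Num.real -> real_linear (fun y => A y + mu *: y).
Proof.
move=> Rmu a v w Ra; rewrite real_linear_antilinear // !scalerDr !scalerA.
by rewrite (mulrC mu a) -scalerA addrACA.
Qed.

Lemma real_linear_Am : real_linear Am.
Proof.
move=> a v w Ra; have NRlam : - lam \is Num.real by rewrite rpredN.
by move: (real_linear_shift NRlam v w Ra); rewrite /Am !scaleNr.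
Qed.

Lemma real_linear_Ap : real_linear Ap.
Proof. exact: real_linear_shift. Qed.

Lemma Am_Ap_comm y : Am (Ap y) = Ap (Am y).
Proof.
rewrite /Am /Ap antilinearD antilinearB !antilinearZ conj_Creal //.
by rewrite scalerDr scalerBr opprD !addrA addrK subrK.
Qed.

Lemma Ap_sub_Am y : Ap y - Am y = (lam + lam) *: y.
Proof. by rewrite /Am /Ap opprB addrC addrA subrK scalerDl. Qed.

Lemma Am_Ap y : Am (Ap y) = AA y.
Proof.
rewrite /Am /Ap /AA antilinearD antilinearZ conj_Creal // scalerDr scalerA -expr2.
by rewrite opprD addrA addrK.
Qed.

Lemma iter_AA k y : iter k AA y = iter k Am (iter k Ap y).
Proof.
elim: k y => [|k IHk] y //=.
by rewrite IHk -Am_Ap -(iter_comm _ _ Am_Ap_comm).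
Qed.

Lemma real_linear_AA : real_linear AA.
Proof. by move=> a v w Ra; rewrite -!Am_Ap real_linear_Ap // real_linear_Am. Qed.

Lemma AA_Z z y : AA (z *: y) = z *: AA y.
Proof. by rewrite /AA !antilinearZ conjCK scalerBr !scalerA mulrC. Qed.

Lemma Am_Zi y : Am ('i *: y) = - 'i *: Ap y.
Proof.
rewrite /Am /Ap antilinearZ conjCi scalerDr; congr (_ + _).
by rewrite !scalerA mulrC mulNr scaleNr.
Qed.

Lemma iter_Am_Zi m y : iter m Am ('i *: y) = (-1) ^+ m *: ('i *: iter m Ap y).
Proof.
elim: m => [|m IHm] /=; first by rewrite expr0 scale1r.
rewrite IHm real_linearZ ?rpredX ?rpredN1 //; last exact: real_linear_Am.
by rewrite Am_Zi exprS mulN1r !scaleNr scalerN.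
Qed.

Lemma iter_Am_Zi_eq0 m y : (iter m Am ('i *: y) == 0) = (iter m Ap y == 0).
Proof. by rewrite iter_Am_Zi !scaler_eq0 signr_eq0 (negbTE (neq0Ci C)). Qed.

Let lam2_neq0 : lam + lam != 0.
Proof. by rewrite -mulr2n mulrn_eq0 negb_or lam_neq0. Qed.

Lemma Wtk_real_subspace k : real_subspace (Wtk A lam k).
Proof. exact: real_subspace_ker (real_linear_iter real_linear_Am k). Qed.

Lemma Wtk_totally_real k : totally_real (Wtk A lam k).
Proof.
move=> v; rewrite /Wtk /= => /eqP Amv; rewrite iter_Am_Zi_eq0 => /eqP Apv.
exact: (iter_ker_disjoint real_linear_Am real_linear_Ap Am_Ap_comm lam2_neq0 Ap_sub_Am
  Amv Apv).
Qed.

Lemma Wtk_Wk k u : Wtk A lam k u -> Wk A lam k u.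
Proof.
rewrite /Wtk /Wk /= => /eqP Amu; apply/eqP.
rewrite iter_AA (iter_iter_comm _ _ _ Am_Ap_comm) Amu.
exact: real_linear0 (real_linear_iter real_linear_Ap k).
Qed.

Lemma Wk_Wtk_decomp k x :
  Wk A lam k x <-> exists u v, [/\ Wtk A lam k u, Wtk A lam k v & x = u + 'i *: v].
Proof.
split=> [|[u [v [Ku Kv ->]]]].
  rewrite /Wk /= iter_AA => /eqP.
  have Rlam2 : lam + lam \is Num.real by rewrite rpredD.
  case/(iter_ker_comp_split real_linear_Am real_linear_Ap Am_Ap_comm Rlam2 lam2_neq0
    Ap_sub_Am).
  move=> u [w [-> Amu Apw]]; exists u, ('i *: (- w)); split.
  - exact/eqP.
  - rewrite /Wtk /= iter_Am_Zi_eq0.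
    by rewrite (real_linearN (real_linear_iter real_linear_Ap k)) Apw oppr0.
  - by rewrite scalerA -expr2 sqrCi scaleN1r opprK.
rewrite /Wk /=; apply/eqP.
rewrite (real_linearD (real_linear_iter real_linear_AA k)) (iter_comm _ _ (AA_Z 'i)).
by rewrite (eqP (Wtk_Wk Ku)) (eqP (Wtk_Wk Kv)) scaler0 addr0.
Qed.

End AntilinearShifts.

Theorem mainTheorem5 (C : numClosedFieldType) (n : nat)
  (A : 'rV[C]_n -> 'rV[C]_n) (lam : C) (k : nat) (s : seq 'rV[C]_n) :
  antilinear A -> lam \is Num.real -> 0 < lam ->
  real_basis_of (Wtk A lam k) s ->
  complex_basis_of (Wk A lam k) s.
Proof.
move=> A_anti Rlam lam_gt0 sK.
have lam_neq0 : lam != 0 by rewrite gt_eqF.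
apply: (real_basis_complex_basis (Wtk_real_subspace A_anti Rlam k) sK).
- exact: Wtk_totally_real A_anti Rlam lam_neq0 k.
- exact: Wk_Wtk_decomp A_anti Rlam lam_neq0 k.
Qed.
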